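(* Let $L$ be a subspace of $\bigwedge^{k}V$ and let $I\subseteq[n]$. Suppose $N_{j\to i}L=L$ for all $i<j$ with $i,j\in I$. Then for each $x\in\bigwedge V^{(I)}$, the family of variable sets of those monomials $y\in\bigwedge V^{([n]\setminus I)}$ with $x\wedge y\in L$ is a shifted set system (with respect to $I$).
   Context: $\mathbb{F}$ is a field (assumed throughout the paper, for expository purposes, to have characteristic not $2$), $V$ is an $n$-dimensional $\mathbb{F}$-vector space with a fixed basis $e_1,\dots,e_n$, and $\bigwedge V$ its exterior algebra; for $S=\{s_1<\cdots<s_r\}\subseteq[n]$, the monomial $e_S=e_{s_1}\wedge\cdots\wedge e_{s_r}$ has variable set $S$, and the monomials with $|S|=k$ form a basis of $\bigwedge^kV$. For $J\subseteq[n]$, $V^{(J)}$ is the span of $\{e_h:h\notin J\}$ (so $V^{([n]\setminus I)}$ is spanned by $\{e_h:h\in I\}$), $V^{(j)}=V^{(\{j\})}$, and $\bigwedge V^{(J)}$ is viewed as a subalgebra of $\bigwedge V$. Slow shift: for distinct $i,j\in[n]$ and nonzero $m\in\bigwedge^kV$, write uniquely $m=x'+e_j\wedge y'$ with $x'\in\bigwedge^kV^{(j)}$, $y'\in\bigwedge^{k-1}V^{(j)}$, and set $N_{j\to i}m=x'+e_i\wedge y'$ if this is nonzero, and $N_{j\to i}m=e_j\wedge y'$ otherwise (the limit as $t\to0$ of the projective action of $e_j\mapsto e_i+te_j$, fixing the other $e_h$). For a subspace $L$, $N_{j\to i}L$ is the span of $\{N_{j\to i}m:m\in L\setminus\{0\}\}$.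 A family $\mathcal{F}$ of subsets of $I$ is shifted (with respect to $I$) if for all $i<j$ in $I$ and every $F\in\mathcal{F}$ with $j\in F$, $i\notin F$, also $(F\setminus\{j\})\cup\{i\}\in\mathcal{F}$. *)

From HB Require Import structures.
From mathcomp Require Import all_boot all_order all_algebra.
Set Implicit Arguments. Unset Strict Implicit. Unset Printing Implicit Defensive.
Import Order.TTheory GRing.Theory Num.Theory.
Local Open Scope ring_scope.

(* Exterior algebra of V = F^n with basis e_0,...,e_{n-1} (0-based indices
   standing for e_1,...,e_n): an element is given by its coordinates on the
   monomial basis e_S, S a subset of 'I_n. *)
Notation ext F n := {ffun {set 'I_n} -> (F : fieldType)^o} (only parsing).

Section Ext.
Variables (F : fieldType) (n : nat).
Implicit Types (S T U J : {set 'I_n}) (x y m : ext F n).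

Definition mono S : ext F n := [ffun T => (T == S)%:R].

(* sign in e_S /\ e_T = sgn(S,T) e_(S u T) for disjoint S, T:
   (-1)^(number of pairs (s,t) in S x T with s > t) *)
Definition wsign S T : F :=
  (-1) ^+ #|[set p in setX S T | (nat_of_ord p.2 < nat_of_ord p.1)%N]|.

Definition wedge x y : ext F n :=
  [ffun U => \sum_(S : {set 'I_n}) \sum_(T : {set 'I_n})
     (if [disjoint S & T] && (S :|: T == U) then wsign S T * x S * y T else 0)].

Definition homog (k : nat) x : Prop := forall S, x S != 0 -> #|S| = k.

(* x lies in bigwedge V^(J), V^(J) = span{e_h : h notin J} *)
Definition in_sub J x : Prop := forall S, x S != 0 -> [disjoint S & J].

(* unique decomposition m = x' + e_j /\ y' with x', y' in bigwedge V^(j) *)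
Definition xpart (j : 'I_n) m : ext F n :=
  [ffun S : {set 'I_n} => if j \in S then 0 else m S].
Definition ypart (j : 'I_n) m : ext F n :=
  [ffun T : {set 'I_n} => if j \in T then 0 else wsign [set j] T * m (j |: T)].

Definition slow_shift (i j : 'I_n) m : ext F n :=
  let z := xpart j m + wedge (mono [set i]) (ypart j m) in
  if z != 0 then z else wedge (mono [set j]) (ypart j m).

Definition in_span (A : ext F n -> Prop) (v : ext F n) : Prop :=
  exists s : seq (F * ext F n),
    (forall p, p \in s -> A p.2) /\ v = \sum_(p <- s) p.1 *: p.2.

Definition shift_stable (i j : 'I_n) (L : {pred ext F n}) : Prop :=
  forall v, v \in L <->
    in_span (fun u => exists m, [/\ m \in L, m != 0 & u = slow_shift i j m]) v.

End Ext.

Definition shifted (n : nat) (I : {set 'I_n}) (Fam : {set {set 'I_n}}) : Prop :=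
  forall (i j : 'I_n), i \in I -> j \in I -> (i < j)%N ->
  forall A, A \in Fam -> j \in A -> i \notin A -> (i |: (A :\ j)) \in Fam.

From HB Require Import structures.
From mathcomp Require Import all_boot all_order all_algebra.
From mathcomp Require Import ring.
Set Implicit Arguments. Unset Strict Implicit. Unset Printing Implicit Defensive.
Import GRing.Theory.
Local Open Scope ring_scope.

(* Write the shifted set as i |: B, where A = j |: B. Since x involves neither
   e_i nor e_j, the element m = x /\ e_A has no e_j-free part, and its
   e_j-cofactor is +-(x^ /\ e_B), x^ the grade involution of x. So the slow
   shift N_{j->i} just trades e_j for e_i: N_{j->i} m = +-(x /\ e_(i |: B)).
   When this is nonzero, m is nonzero too, and N_{j->i} m lies in
   N_{j->i} L = L. *)

Lemma setUD_id (T : finType) (A B : {set T}) : A \subset B -> A :|: (B :\: A) = B.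
Proof. by move=> AB; rewrite -{2}(setID B A) (setIidPr AB). Qed.

Lemma disjoint_setD (T : finType) (A B : {set T}) : [disjoint A & B :\: A].
Proof. by rewrite disjoint_sym; apply/setDidPl; rewrite setDDl setUid. Qed.

Lemma eq_setUD (T : finType) (A B : {set T}) : (A :|: (B :\: A) == B) = (A \subset B).
Proof. by apply/eqP/idP => [<-|/setUD_id //]; exact: subsetUl. Qed.

Lemma sum_if_unique (V : nmodType) (I : finType) (P : pred I) (G : I -> V) i0 :
  (forall i, P i -> i = i0) -> \sum_i (if P i then G i else 0) = if P i0 then G i0 else 0.
Proof.
move=> P_i0; rewrite (bigD1 i0) //= big1 ?addr0 // => i ne_i_i0.
by case: ifP => // /P_i0 eq_i_i0; rewrite eq_i_i0 eqxx in ne_i_i0.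
Qed.

Section Wedge.
Variables (F : fieldType) (n : nat).
Implicit Types (S T U A B J : {set 'I_n}) (x y : ext F n).

Definition pair_sign (s t : 'I_n) : F := if (t < s)%N then -1 else 1.

Lemma wsignE S T : wsign F S T = \prod_(s in S) \prod_(t in T) pair_sign s t.
Proof.
rewrite /wsign -prodr_const big_mkcond /= pair_big_dep /=.
rewrite [RHS]big_mkcond /=; apply: eq_bigr => -[a b] _ /=.
by rewrite !inE /pair_sign /=; case: (a \in S); case: (b \in T); case: (b < a)%N.
Qed.

Lemma wsignUr S A B : [disjoint A & B] ->
  wsign F S (A :|: B) = wsign F S A * wsign F S B.
Proof.
move=> dAB; rewrite !wsignE -big_split /=; apply: eq_bigr => s _.
by rewrite (eq_bigl [predU A & B]) ?bigU // => t; rewrite !inE.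
Qed.

Lemma wsign_sqr S T : wsign F S T ^+ 2 = 1.
Proof. exact: sqrr_sign. Qed.

Lemma wsign_neq0 S T : wsign F S T != 0.
Proof. by rewrite /wsign signr_eq0. Qed.

Lemma wsign_set1_swap a S : a \notin S ->
  wsign F [set a] S * wsign F S [set a] = (-1) ^+ #|S|.
Proof.
move=> aS; rewrite !wsignE big_set1 -prodr_const -big_split /=.
apply: eq_bigr => s sS; rewrite big_set1 /pair_sign.
have ne_as : a != s by apply: contraNneq aS => ->.
case: ltngtP => //= [_|_|/val_inj eq_as]; rewrite ?mulr1 ?mul1r //.
by rewrite eq_as eqxx in ne_as.
Qed.

Lemma wsign_set1C a S : a \notin S ->
  wsign F S [set a] = (-1) ^+ #|S| * wsign F [set a] S.
Proof. by move=> aS; rewrite -(wsign_set1_swap aS) mulrC mulrA -expr2 wsign_sqr mul1r. Qed.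

Lemma wedge_monoR x A U : wedge x (mono F A) U =
  if A \subset U then wsign F (U :\: A) A * x (U :\: A) else 0.
Proof.
rewrite ffunE.
under eq_bigr => S _.
  rewrite (bigD1 A) //= big1 => [|T /negbTE ne_TA]; last by rewrite ffunE ne_TA mulr0 if_same.
  rewrite ffunE eqxx mulr1 addr0.
  over.
rewrite /= (@sum_if_unique _ _ _ _ (U :\: A)); last first.
  by move=> S /andP[dSA /eqP <-]; rewrite setDUl setDv setU0; apply/esym/setDidPl.
by rewrite disjoint_sym disjoint_setD setUC eq_setUD.
Qed.

Lemma wedge_monoL y A U : wedge (mono F A) y U =
  if A \subset U then wsign F A (U :\: A) * y (U :\: A) else 0.
Proof.
rewrite ffunE (bigD1 A) //= [X in _ + X]big1 => [|S /negbTE ne_SA]; last first.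
  by apply: big1 => T _; rewrite ffunE ne_SA mulr0 mul0r if_same.
under eq_bigr => T _ do rewrite ffunE eqxx mulr1.
rewrite addr0 (@sum_if_unique _ _ _ _ (U :\: A)); last first.
  move=> T /andP[dAT /eqP <-]; rewrite setDUl setDv set0U.
  by apply/esym/setDidPl; rewrite disjoint_sym.
by rewrite disjoint_setD eq_setUD.
Qed.

(* e_a /\ x = grade_inv x /\ e_a: moving e_a across e_S costs (-1)^|S|. *)
Definition grade_inv x : ext F n := [ffun S : {set 'I_n} => (-1) ^+ #|S| * x S].

Lemma in_subS J J' x : J' \subset J -> in_sub J x -> in_sub J' x.
Proof. by move=> sJ'J xJ S /xJ; apply: disjointWr. Qed.

Lemma in_sub1_eq0 j x S : in_sub [set j] x -> j \in S -> x S = 0.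
Proof. by move=> xj jS; apply/eqP; apply: contraTT jS => /xj; rewrite disjoint_sym disjoints1. Qed.

Lemma xpart_wedge_mono j x A : j \in A -> xpart j (wedge x (mono F A)) = 0.
Proof.
move=> jA; apply/ffunP => S; rewrite [RHS]ffunE ffunE wedge_monoR.
by case: ifP => // jS; rewrite ifF //; apply: contraFF jS => /subsetP; apply.
Qed.

Lemma ypart_wedge_mono j x B : j \notin B -> in_sub [set j] x ->
  ypart j (wedge x (mono F (j |: B))) = wsign F [set j] B *: wedge (grade_inv x) (mono F B).
Proof.
move=> jB xj; apply/ffunP => T.
rewrite [RHS]ffunE ffunE !wedge_monoR ffunE.
case: ifP => jT.
  have jTB : j \in T :\: B by rewrite inE jT jB.
  by rewrite (in_sub1_eq0 xj jTB) !mulr0 if_same scaler0.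
have -> : (j |: B \subset j |: T) = (B \subset T).
  by apply/idP/idP => [/(setSD [set j])|]; [rewrite !setU1K ?jT | exact: setUS].
have -> : (j |: T) :\: (j |: B) = T :\: B.
  by apply/setP => t; rewrite !inE; case: eqP => [->|_] //=; rewrite jT andbF.
case: ifP => BT; last by rewrite mulr0 scaler0.
set S := T :\: B; have [->|xS] := eqVneq (x S) 0; first by rewrite !mulr0 scaler0.
have jS : j \notin S by rewrite -disjoints1 disjoint_sym xj.
rewrite -{1}(setUD_id BT) -/S !wsignUr ?disjoints1 ?disjoint_setD // -(wsign_set1_swap jS).
rewrite /GRing.scale /=; ring.
Qed.

Lemma wedge_mono1_grade_inv i x B : i \notin B -> in_sub [set i] x ->
  wedge (mono F [set i]) (wedge (grade_inv x) (mono F B)) =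
  wsign F [set i] B *: wedge x (mono F (i |: B)).
Proof.
move=> iB xi; apply/ffunP => U.
rewrite [RHS]ffunE wedge_monoL !wedge_monoR ffunE sub1set -setDDl subUset sub1set.
have [iU|iU] /= := boolP (i \in U); last by rewrite scaler0.
have [BU|BU] /= := boolP (B \subset U); last by rewrite subsetD1 (negbTE BU) mulr0 scaler0.
have BUi : B \subset U :\ i by rewrite subsetD1 BU iB.
rewrite BUi -{1}(setUD_id BUi); set S := U :\ i :\: B.
have [->|xS] := eqVneq (x S) 0; first by rewrite !mulr0 scaler0.
have iS : i \notin S by rewrite -disjoints1 disjoint_sym xi.
rewrite !wsignUr ?disjoints1 ?disjoint_setD // wsign_set1C //.
rewrite /GRing.scale /=; ring.
Qed.

Lemma wedgeZr x y (c : F) : wedge x (c *: y) = c *: wedge x y.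
Proof.
apply/ffunP => U; rewrite !ffunE scaler_sumr; apply: eq_bigr => S _.
rewrite scaler_sumr; apply: eq_bigr => T _; rewrite ffunE.
by case: ifP => _; rewrite ?scaler0 // /GRing.scale /= mulrCA.
Qed.

Lemma slow_shift0 (i j : 'I_n) : slow_shift i j (0 : ext F n) = 0.
Proof.
have xpart0 : xpart j 0 = 0 :> ext F n by apply/ffunP => S; rewrite !ffunE if_same.
have ypart0 : ypart j 0 = 0 :> ext F n by apply/ffunP => T; rewrite !ffunE mulr0 if_same.
have wedge0 (a : ext F n) : wedge a 0 = 0 by rewrite -[X in wedge a X](scale0r 0) wedgeZr scale0r.
by rewrite /slow_shift xpart0 ypart0 !wedge0 add0r eqxx.
Qed.

Lemma slow_shift_wedge_mono i j x B :
  i \notin B -> j \notin B -> in_sub [set i] x -> in_sub [set j] x ->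
  wedge x (mono F (i |: B)) != 0 ->
  slow_shift i j (wedge x (mono F (j |: B))) =
  (wsign F [set i] B * wsign F [set j] B) *: wedge x (mono F (i |: B)).
Proof.
move=> iB jB xi xj w_neq0.
rewrite /slow_shift xpart_wedge_mono ?setU11 // add0r ypart_wedge_mono // wedgeZr.
rewrite wedge_mono1_grade_inv // scalerA mulrC.
by rewrite ifT // scaler_eq0 negb_or mulf_neq0 ?wsign_neq0.
Qed.

Lemma shift_stable_mem (i j : 'I_n) (L : {pred ext F n}) m :
  shift_stable i j L -> m \in L -> m != 0 -> slow_shift i j m \in L.
Proof.
move=> stable_L mL m_neq0; apply/stable_L; exists [:: (1, slow_shift i j m)]; split.
  by move=> p; rewrite inE => /eqP -> /=; exists m.
by rewrite big_seq1 scale1r.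
Qed.

End Wedge.

Theorem proposition3p12 (F : fieldType) (n k : nat)
    (char_not2 : (2 \notin [pchar F])%N)
    (L : {pred ext F n}) (L_sub : submod_closed L)
    (L_homog : forall v, v \in L -> homog k v)
    (I : {set 'I_n})
    (L_stable : forall i j : 'I_n, i \in I -> j \in I -> (i < j)%N ->
                  shift_stable i j L)
    (x : ext F n) (x_in : in_sub I x) :
  shifted I [set S : {set 'I_n} | (S \subset I) && (wedge x (mono F S) \in L)].
Proof.
move=> i j iI jI lt_ij A; rewrite !inE => /andP[AI mL] jA iA.
set B := A :\ j; have jB : j \notin B by rewrite !inE eqxx.
have iB : i \notin B by rewrite !inE (negbTE iA) andbF.
rewrite subUset sub1set iI (subset_trans (subD1set A j) AI) /=.
have [->|w_neq0] := eqVneq (wedge x (mono F (i |: B))) 0; first exact: L_sub.1.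
have xi : in_sub [set i] x by apply: in_subS x_in; rewrite sub1set.
have xj : in_sub [set j] x by apply: in_subS x_in; rewrite sub1set.
have := slow_shift_wedge_mono iB jB xi xj w_neq0; rewrite setD1K //.
set c := _ * _; set m := wedge x _ => shift_m.
have c2 : c * c = 1 by rewrite -expr2 exprMn !wsign_sqr mulr1.
have wE : wedge x (mono F (i |: B)) = c *: slow_shift i j m.
  by rewrite shift_m scalerA c2 scale1r.
have m_neq0 : m != 0.
  by apply: contra_neq w_neq0 => m0; rewrite wE m0 slow_shift0 scaler0.
have shift_mL := shift_stable_mem (L_stable i j iI jI lt_ij) mL m_neq0.
by rewrite wE; apply: (GRing.submod_closed_semi L_sub).2.
Qed.
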